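(* Let $(X,T)$ be a minimal topological dynamical system. Then $(X,T)$ is mean equicontinuous if and only if it is equicontinuous in the mean.
   Context: A t.d.s. $(X,T)$ consists of a compact metric space $(X,d)$ and a continuous map $T\colon X\to X$; it is minimal if every orbit $\{x,Tx,T^2x,\dots\}$ is dense in $X$. Let $\bar d_n(x,y)=\frac1n\sum_{i=0}^{n-1}d(T^ix,T^iy)$. $(X,T)$ is mean equicontinuous if for every $\varepsilon>0$ there is $\delta>0$ such that $d(x,y)<\delta$ implies $\limsup_{n\to\infty}\bar d_n(x,y)<\varepsilon$. $(X,T)$ is equicontinuous in the mean if for every $\varepsilon>0$ there is $\delta>0$ such that $d(x,y)<\delta$ implies $\bar d_n(x,y)<\varepsilon$ for every $n\in\mathbb{N}$. *)

From Stdlib Require Import Reals Lra.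
Open Scope R_scope.

Record is_metric {X : Type} (d : X -> X -> R) : Prop := {
  metric_nonneg : forall x y, 0 <= d x y;
  metric_eq0 : forall x y, d x y = 0 <-> x = y;
  metric_sym : forall x y, d x y = d y x;
  metric_tri : forall x y z, d x z <= d x y + d y z
}.

Definition open_set {X : Type} (d : X -> X -> R) (U : X -> Prop) : Prop :=
  forall x, U x -> exists r, 0 < r /\ forall y, d x y < r -> U y.

Definition compact_metric {X : Type} (d : X -> X -> R) : Prop :=
  forall (I : Type) (U : I -> X -> Prop),
    (forall i, open_set d (U i)) ->
    (forall x, exists i, U i x) ->
    exists l : list I, forall x, exists i, List.In i l /\ U i x.

Definition continuous_map {X : Type} (d : X -> X -> R) (T : X -> X) : Prop :=
  forall x eps, 0 < eps -> exists delta, 0 < delta /\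
    forall y, d x y < delta -> d (T x) (T y) < eps.

Definition minimal {X : Type} (d : X -> X -> R) (T : X -> X) : Prop :=
  forall x y eps, 0 < eps -> exists n : nat, d y (Nat.iter n T x) < eps.

Fixpoint sum_orbit {X : Type} (d : X -> X -> R) (T : X -> X) (n : nat) (x y : X) : R :=
  match n with
  | O => 0
  | S k => sum_orbit d T k x y + d (Nat.iter k T x) (Nat.iter k T y)
  end.

Definition dbar {X : Type} (d : X -> X -> R) (T : X -> X) (n : nat) (x y : X) : R :=
  sum_orbit d T n x y / INR n.

(* limsup_{n->oo} u n < eps, written out: some c < eps bounds u eventually. *)
Definition limsup_lt (u : nat -> R) (eps : R) : Prop :=
  exists c, c < eps /\ exists N : nat, forall n, (N <= n)%nat -> u n <= c.

Definition mean_equicontinuous {X : Type} (d : X -> X -> R) (T : X -> X) : Prop :=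
  forall eps, 0 < eps -> exists delta, 0 < delta /\
    forall x y, d x y < delta -> limsup_lt (fun n => dbar d T n x y) eps.

Definition equicontinuous_in_mean {X : Type} (d : X -> X -> R) (T : X -> X) : Prop :=
  forall eps, 0 < eps -> exists delta, 0 < delta /\
    forall x y, d x y < delta -> forall n : nat, (1 <= n)%nat -> dbar d T n x y < eps.

From Stdlib Require Import Reals Lra Lia Classical ClassicalEpsilon.
Open Scope R_scope.

(* Mean equicontinuity at scale e gives delta such that pairs with d x y < delta, and
   hence all pairs (T^j x, T^j y) along their orbits, have limsup of dbar below e.
   Compactness makes this uniform: some M bounds, for every pair with limsup below e,
   the length of a window starting at time 0 on which the average is below 3e.
   Chaining such windows bounds dbar_n x y by 3e + M * diam X / n, which is small
   for large n; the finitely many remaining n are handled by uniform continuity of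
   T, ..., T^(N-1). *)

Lemma INR_pos_of_ge1 (n : nat) : (1 <= n)%nat -> 0 < INR n.
Proof. intro Hn. apply lt_0_INR. lia. Qed.

Lemma lt_mul_INR_iff (s c : R) (n : nat) : (1 <= n)%nat -> s / INR n < c <-> s < c * INR n.
Proof.
  intro Hn. pose proof (INR_pos_of_ge1 n Hn) as Hpos.
  replace s with (s / INR n * INR n) at 2 by (field; lra).
  split; intro H.
  - apply Rmult_lt_compat_r; assumption.
  - exact (Rmult_lt_reg_r _ _ _ Hpos H).
Qed.

Lemma le_mul_INR_iff (s c : R) (n : nat) : (1 <= n)%nat -> s / INR n <= c <-> s <= c * INR n.
Proof.
  intro Hn. pose proof (INR_pos_of_ge1 n Hn) as Hpos.
  replace s with (s / INR n * INR n) at 2 by (field; lra).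
  split; intro H.
  - apply Rmult_le_compat_r; lra.
  - exact (Rmult_le_reg_r _ _ _ Hpos H).
Qed.

(* [/ 0 = 0], so this needs no positivity hypothesis. *)
Lemma inv_INR_nonneg (n : nat) : 0 <= / INR n.
Proof.
  destruct n as [|n]; [simpl; rewrite Rinv_0; lra|].
  apply Rlt_le, Rinv_0_lt_compat, lt_0_INR. lia.
Qed.

Section CompactMetric.

Context {X : Type} {d : X -> X -> R} (Hm : is_metric d).

Lemma metric_refl (x : X) : d x x = 0.
Proof. exact (proj2 (metric_eq0 d Hm x x) eq_refl). Qed.

Definition cluster_point (s : nat -> X) (p : X) : Prop :=
  forall r, 0 < r -> forall K, exists k, (K <= k)%nat /\ d (s k) p < r.

Hypothesis Hc : compact_metric d.

(* If no point were a cluster point, the balls that [s] eventually avoids would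
   form an open cover; a finite subcover gives a time after which [s] avoids all of X. *)
Lemma exists_cluster_point (s : nat -> X) : exists p, cluster_point s p.
Proof.
  apply NNPP; intro Hnone.
  assert (Havoid : forall p, exists r K, 0 < r /\ forall k, (K <= k)%nat -> r <= d (s k) p).
  { intro p. apply NNPP; intro Hp. apply Hnone. exists p. intros r Hr K.
    apply NNPP; intro HK. apply Hp. exists r, K. split; [exact Hr|].
    intros k Hk. apply Rnot_lt_le. intro Hlt. apply HK. exists k. auto. }
  set (I := {p : X & {r : R & {K : nat | 0 < r /\ forall k, (K <= k)%nat -> r <= d (s k) p}}}).
  set (time := fun i : I => proj1_sig (projT2 (projT2 i))).
  destruct (Hc I (fun i y => d (projT1 i) y < projT1 (projT2 i))) as [l Hl].
  - intros [p [r [K [Hr HK]]]] x Hx; simpl in *.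
    exists (r - d p x). split; [lra|]. intros y Hy.
    pose proof (metric_tri d Hm p x y). lra.
  - intro x. destruct (Havoid x) as [r [K [Hr HK]]].
    exists (existT _ x (existT _ r (exist _ K (conj Hr HK)))). simpl.
    rewrite metric_refl. exact Hr.
  - set (K := List.list_max (List.map time l)).
    destruct (Hl (s K)) as [i [Hin Hlt]].
    assert (HiK : (time i <= K)%nat).
    { apply (proj1 (List.Forall_forall _ _) (proj1 (List.list_max_le _ _) (le_n K))).
      now apply List.in_map. }
    pose proof (proj2 (proj2_sig (projT2 (projT2 i))) K HiK).
    rewrite (metric_sym d Hm) in Hlt. lra.
Qed.

Lemma exists_joint_cluster_point (u v : nat -> X) :
  exists p q, forall r, 0 < r -> forall K,
    exists k, (K <= k)%nat /\ d (u k) p < r /\ d (v k) q < r.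
Proof.
  destruct (exists_cluster_point u) as [p Hp].
  assert (Hsub : forall k, exists m, (k <= m)%nat /\ d (u m) p < / INR (S k)).
  { intro k. apply Hp, Rinv_0_lt_compat, lt_0_INR. lia. }
  destruct (choice _ Hsub) as [phi Hphi].
  destruct (exists_cluster_point (fun k => v (phi k))) as [q Hq].
  exists p, q. intros r Hr K.
  destruct (archimed_cor1 r Hr) as [k0 [Hk0 Hk0pos]].
  destruct (Hq r Hr (Nat.max K k0)) as [k [Hk Hvk]].
  destruct (Hphi k) as [Hphik Hupk].
  exists (phi k). split; [lia|]. split; [|exact Hvk].
  assert (/ INR (S k) <= / INR k0).
  { apply Rinv_le_contravar; [apply lt_0_INR; lia | apply le_INR; lia]. }
  lra.
Qed.

Lemma metric_bounded : exists B, 0 <= B /\ forall a b, d a b <= B.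
Proof.
  destruct (classic (inhabited X)) as [[x0]|Hempty].
  2: { exists 0. split; [lra|]. intros a. exfalso. exact (Hempty (inhabits a)). }
  assert (Hball : exists B, forall z, d x0 z <= B).
  { apply NNPP; intro Hunb.
    assert (Hfar : forall k : nat, exists z, INR k < d x0 z).
    { intro k. apply NNPP; intro Hk. apply Hunb. exists (INR k). intro z.
      apply Rnot_lt_le. intro Hz. apply Hk. exists z. exact Hz. }
    destruct (choice _ Hfar) as [z Hz].
    destruct (exists_cluster_point z) as [p Hp].
    destruct (INR_archimed 1 (d x0 p + 1)) as [K HK]; [lra|].
    destruct (Hp 1 ltac:(lra) K) as [k [Hk Hd]].
    pose proof (metric_tri d Hm x0 p (z k)).
    rewrite (metric_sym d Hm (z k) p) in Hd.
    pose proof (le_INR _ _ Hk). pose proof (Hz k). lra. }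
  destruct Hball as [B HB]. exists (B + B). split.
  - pose proof (HB x0). rewrite metric_refl in *. lra.
  - intros a b. pose proof (metric_tri d Hm a x0 b). pose proof (HB a). pose proof (HB b).
    rewrite (metric_sym d Hm a x0) in *. lra.
Qed.

Lemma uniform_continuity (f : X -> X) : continuous_map d f ->
  forall e, 0 < e -> exists eta, 0 < eta /\ forall x y, d x y < eta -> d (f x) (f y) < e.
Proof.
  intros Hf e He. apply NNPP; intro Hnot.
  assert (Hbad : forall k : nat, exists xy : X * X,
    d (fst xy) (snd xy) < / INR (S k) /\ e <= d (f (fst xy)) (f (snd xy))).
  { intro k. apply NNPP; intro Hk. apply Hnot. exists (/ INR (S k)). split.
    - apply Rinv_0_lt_compat, lt_0_INR. lia.
    - intros x y Hxy. apply Rnot_le_lt. intro Hle. apply Hk. exists (x, y). auto. }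
  destruct (choice _ Hbad) as [xy Hxy].
  destruct (exists_cluster_point (fun k => fst (xy k))) as [p Hp].
  destruct (Hf p (e / 2)) as [dl [Hdl Hfp]]; [lra|].
  destruct (archimed_cor1 (dl / 2) ltac:(lra)) as [k0 [Hk0 Hk0pos]].
  destruct (Hp (dl / 2) ltac:(lra) k0) as [k [Hk Hd]].
  destruct (Hxy k) as [Hclose Hfar].
  assert (/ INR (S k) <= / INR k0).
  { apply Rinv_le_contravar; [apply lt_0_INR; lia | apply le_INR; lia]. }
  set (a := fst (xy k)) in *. set (b := snd (xy k)) in *.
  rewrite (metric_sym d Hm) in Hd.
  pose proof (metric_tri d Hm p a b).
  pose proof (Hfp a ltac:(lra)). pose proof (Hfp b ltac:(lra)).
  pose proof (metric_tri d Hm (f a) (f p) (f b)).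
  rewrite (metric_sym d Hm (f a) (f p)) in *. lra.
Qed.

Lemma continuous_map_iter (T : X -> X) (n : nat) :
  continuous_map d T -> continuous_map d (Nat.iter n T).
Proof.
  intro HT. induction n as [|n IH]; intros x e He; simpl.
  - exists e. auto.
  - destruct (HT (Nat.iter n T x) e He) as [e1 [He1 H1]].
    destruct (IH x e1 He1) as [e2 [He2 H2]].
    exists e2. auto.
Qed.

Lemma uniform_continuity_iter_upto (T : X -> X) (N : nat) : continuous_map d T ->
  forall e, 0 < e -> exists eta, 0 < eta /\ forall x y, d x y < eta ->
    forall i, (i < N)%nat -> d (Nat.iter i T x) (Nat.iter i T y) < e.
Proof.
  intros HT e He. induction N as [|N IH].
  - exists 1. split; [lra|]. intros; lia.
  - destruct IH as [e1 [He1 H1]].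
    destruct (uniform_continuity _ (continuous_map_iter T N HT) e He) as [e2 [He2 H2]].
    exists (Rmin e1 e2). split; [apply Rmin_pos; assumption|].
    intros x y Hxy i Hi.
    pose proof (Rmin_l e1 e2). pose proof (Rmin_r e1 e2).
    destruct (Nat.eq_dec i N) as [->|Hne].
    + apply H2. lra.
    + apply H1; [lra | lia].
Qed.

End CompactMetric.

Section OrbitAverages.

Context {X : Type} {d : X -> X -> R} (Hm : is_metric d) (T : X -> X).

Lemma sum_orbit_nonneg (n : nat) (x y : X) : 0 <= sum_orbit d T n x y.
Proof.
  induction n; cbn [sum_orbit]; [lra|].
  pose proof (metric_nonneg d Hm (Nat.iter n T x) (Nat.iter n T y)). lra.
Qed.

Lemma sum_orbit_triangle (n : nat) (x y z : X) :
  sum_orbit d T n x z <= sum_orbit d T n x y + sum_orbit d T n y z.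
Proof.
  induction n; cbn [sum_orbit]; [lra|].
  pose proof (metric_tri d Hm (Nat.iter n T x) (Nat.iter n T y) (Nat.iter n T z)). lra.
Qed.

Lemma sum_orbit_add (a b : nat) (x y : X) :
  sum_orbit d T (a + b) x y =
  sum_orbit d T a x y + sum_orbit d T b (Nat.iter a T x) (Nat.iter a T y).
Proof.
  induction b as [|b IH].
  - rewrite Nat.add_0_r. cbn [sum_orbit]. lra.
  - rewrite Nat.add_succ_r. cbn [sum_orbit]. rewrite IH, <- !Nat.iter_add, (Nat.add_comm b a). lra.
Qed.

Lemma sum_orbit_le_pointwise (n : nat) (x y : X) (e : R) :
  (forall i, (i < n)%nat -> d (Nat.iter i T x) (Nat.iter i T y) <= e) ->
  sum_orbit d T n x y <= e * INR n.
Proof.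
  induction n as [|n IH]; intro H; cbn [sum_orbit]; [simpl; lra|].
  rewrite S_INR. pose proof (H n (Nat.lt_succ_diag_r n)).
  assert (sum_orbit d T n x y <= e * INR n) by (apply IH; intros; apply H; lia). lra.
Qed.

Lemma dbar_lt_pointwise (n : nat) (x y : X) (e : R) : (1 <= n)%nat ->
  (forall i, (i < n)%nat -> d (Nat.iter i T x) (Nat.iter i T y) < e) ->
  dbar d T n x y < e.
Proof.
  intros Hn H. unfold dbar. apply lt_mul_INR_iff; [exact Hn|].
  destruct n as [|n]; [lia|]. cbn [sum_orbit]. rewrite S_INR.
  pose proof (H n (Nat.lt_succ_diag_r n)).
  assert (sum_orbit d T n x y <= e * INR n)
    by (apply sum_orbit_le_pointwise; intros; left; apply H; lia). lra.
Qed.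

Lemma dbar_nonneg (n : nat) (x y : X) : 0 <= dbar d T n x y.
Proof. apply Rmult_le_pos; [apply sum_orbit_nonneg | apply inv_INR_nonneg]. Qed.

Lemma dbar_triangle (n : nat) (x y z : X) :
  dbar d T n x z <= dbar d T n x y + dbar d T n y z.
Proof.
  unfold dbar, Rdiv. rewrite <- Rmult_plus_distr_r.
  apply Rmult_le_compat_r; [apply inv_INR_nonneg | apply sum_orbit_triangle].
Qed.

Lemma limsup_lt_dbar_triangle (x y z : X) (a b : R) :
  limsup_lt (fun n => dbar d T n x y) a -> limsup_lt (fun n => dbar d T n y z) b ->
  limsup_lt (fun n => dbar d T n x z) (a + b).
Proof.
  intros [c1 [Hc1 [N1 H1]]] [c2 [Hc2 [N2 H2]]].
  exists (c1 + c2). split; [lra|]. exists (Nat.max N1 N2). intros n Hn.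
  pose proof (dbar_triangle n x y z). pose proof (H1 n ltac:(lia)).
  pose proof (H2 n ltac:(lia)). lra.
Qed.

(* [sum_orbit n (T x) (T y) <= sum_orbit (S n) x y], so [dbar n (T x) (T y)] exceeds
   [dbar (S n) x y] by at most a factor [(n + 1) / n]. *)
Lemma limsup_lt_dbar_shift (x y : X) (a : R) :
  limsup_lt (fun n => dbar d T n x y) a -> limsup_lt (fun n => dbar d T n (T x) (T y)) a.
Proof.
  intros [c [Hca [N H]]].
  assert (Hc0 : 0 <= c) by (pose proof (H N (le_n N)); pose proof (dbar_nonneg N x y); lra).
  set (c' := (c + a) / 2).
  destruct (INR_archimed (c' - c) c) as [K HK]; [unfold c'; lra|].
  exists c'. split; [unfold c'; lra|]. exists (Nat.max (Nat.max N K) 1). intros n Hn.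
  pose proof (H (S n) ltac:(lia)) as HS.
  apply le_mul_INR_iff in HS; [|lia].
  rewrite S_INR in HS. rewrite <- Nat.add_1_l, sum_orbit_add in HS. simpl Nat.iter in HS.
  pose proof (sum_orbit_nonneg 1 x y).
  assert (INR K * (c' - c) <= INR n * (c' - c))
    by (apply Rmult_le_compat_r; [unfold c'; lra | apply le_INR; lia]).
  apply le_mul_INR_iff; [lia|]. nra.
Qed.

Lemma limsup_lt_dbar_shift_iter (x y : X) (a : R) (j : nat) :
  limsup_lt (fun n => dbar d T n x y) a ->
  limsup_lt (fun n => dbar d T n (Nat.iter j T x) (Nat.iter j T y)) a.
Proof.
  intro H. induction j as [|j IH]; [exact H|]. apply limsup_lt_dbar_shift, IH.
Qed.

(* Cut [0, L) greedily into blocks of length at most [M] on which the average is at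
   most [c]; only the last, incomplete block is estimated by the diameter bound [B]. *)
Lemma sum_orbit_le_of_returns (x y : X) (c B : R) (M : nat) :
  0 <= c -> (forall a b, d a b <= B) ->
  (forall j, exists n, (1 <= n <= M)%nat /\
     dbar d T n (Nat.iter j T x) (Nat.iter j T y) <= c) ->
  forall L j, sum_orbit d T L (Nat.iter j T x) (Nat.iter j T y) <= c * INR L + INR M * B.
Proof.
  intros Hc HB Hret L.
  induction L as [L IH] using (well_founded_induction Wf_nat.lt_wf). intro j.
  destruct (Hret j) as [n [Hn Hblock]].
  apply le_mul_INR_iff in Hblock; [|lia].
  destruct (Compare_dec.le_lt_dec n L) as [HnL|HLn].
  - replace L with (n + (L - n))%nat at 1 by lia.
    rewrite sum_orbit_add, <- !Nat.iter_add.
    specialize (IH (L - n)%nat ltac:(lia) (n + j)%nat).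
    rewrite minus_INR in IH by lia. nra.
  - pose proof (sum_orbit_le_pointwise L (Nat.iter j T x) (Nat.iter j T y) B
      (fun i _ => HB _ _)).
    assert (INR L <= INR M) by (apply le_INR; lia).
    pose proof (pos_INR L).
    assert (0 <= B) by (pose proof (HB x x); pose proof (metric_nonneg d Hm x x); lra).
    nra.
Qed.

End OrbitAverages.

Section MeanEquicontinuity.

Context {X : Type} {d : X -> X -> R} (Hm : is_metric d) (Hc : compact_metric d)
  (T : X -> X) (HT : continuous_map d T).

Lemma dbar_lt_of_near (n : nat) (e : R) : (1 <= n)%nat -> 0 < e ->
  exists eta, 0 < eta /\ forall u v p q, d u p < eta -> d v q < eta ->
    dbar d T n u v < dbar d T n p q + e.
Proof.
  intros Hn He.
  destruct (uniform_continuity_iter_upto Hm Hc T n HT (e / 2) ltac:(lra)) as [eta [Heta Hnear]].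
  exists eta. split; [exact Heta|]. intros u v p q Hup Hvq.
  assert (Hqv : d q v < eta) by (rewrite (metric_sym d Hm); exact Hvq).
  pose proof (dbar_lt_pointwise T n u p (e / 2) Hn (Hnear u p Hup)).
  pose proof (dbar_lt_pointwise T n q v (e / 2) Hn (Hnear q v Hqv)).
  pose proof (dbar_triangle Hm T n u p v). pose proof (dbar_triangle Hm T n p q v). lra.
Qed.

(* Take bad pairs [(u M, v M)] for every [M] and a joint cluster point [(p, q)].
   Some [(u M0, v M0)] lies within [delta] of [(p, q)], so the limsup of [dbar (p, q)]
   is below [3 e]; by continuity of the finite average [dbar n1] at [(p, q)], the later
   bad pairs near [(p, q)] have [dbar n1] below [3 e] as well. *)
Lemma uniform_return (e delta : R) : 0 < delta ->
  (forall u v, d u v < delta -> limsup_lt (fun n => dbar d T n u v) e) ->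
  exists M, forall u v, limsup_lt (fun n => dbar d T n u v) e ->
    exists n, (1 <= n <= M)%nat /\ dbar d T n u v < 3 * e.
Proof.
  intros Hdelta Hclose. apply NNPP; intro Hnot.
  assert (Hbad : forall M, exists uv : X * X,
    limsup_lt (fun n => dbar d T n (fst uv) (snd uv)) e /\
    forall n, (1 <= n <= M)%nat -> 3 * e <= dbar d T n (fst uv) (snd uv)).
  { intro M. apply NNPP; intro HM. apply Hnot. exists M. intros u v Huv.
    apply NNPP; intro Hn. apply HM. exists (u, v). split; [exact Huv|].
    intros n Hn'. apply Rnot_lt_le. intro Hlt. apply Hn. exists n. auto. }
  destruct (choice _ Hbad) as [uv Huv].
  destruct (exists_joint_cluster_point Hm Hc (fun M => fst (uv M)) (fun M => snd (uv M)))
    as [p [q Hpq]].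
  destruct (Hpq delta Hdelta 0%nat) as [M0 [_ [Hu0 Hv0]]].
  assert (Hpu : d p (fst (uv M0)) < delta) by (rewrite (metric_sym d Hm); exact Hu0).
  destruct (limsup_lt_dbar_triangle Hm T _ _ _ _ _
    (limsup_lt_dbar_triangle Hm T _ _ _ _ _ (Hclose _ _ Hpu) (proj1 (Huv M0)))
    (Hclose _ _ Hv0)) as [c [Hc3 [N HN]]].
  set (n1 := Nat.max N 1).
  destruct (dbar_lt_of_near n1 (3 * e - c) ltac:(lia) ltac:(lra)) as [eta [Heta Hnear]].
  destruct (Hpq eta Heta n1) as [M [HM [Hu Hv]]].
  pose proof (HN n1 ltac:(lia)). pose proof (Hnear _ _ _ _ Hu Hv).
  pose proof (proj2 (Huv M) n1 ltac:(lia)). lra.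
Qed.

Lemma equicontinuous_in_mean_of_mean_equicontinuous :
  mean_equicontinuous d T -> equicontinuous_in_mean d T.
Proof.
  intros Hme eps Heps.
  destruct (Hme (eps / 6) ltac:(lra)) as [delta [Hdelta Hclose]].
  destruct (uniform_return (eps / 6) delta Hdelta Hclose) as [M HM].
  destruct (metric_bounded Hm Hc) as [B [HB0 HB]].
  destruct (INR_archimed (eps / 2) (INR M * B)) as [N HN]; [lra|].
  destruct (uniform_continuity_iter_upto Hm Hc T N HT eps Heps) as [eta [Heta Hnear]].
  exists (Rmin delta eta). split; [apply Rmin_pos; assumption|].
  intros x y Hxy n Hn.
  pose proof (Rmin_l delta eta). pose proof (Rmin_r delta eta).
  destruct (Compare_dec.le_lt_dec N n) as [HNn|HnN].
  - assert (Hret : forall j, exists k, (1 <= k <= M)%nat /\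
        dbar d T k (Nat.iter j T x) (Nat.iter j T y) <= eps / 2).
    { intro j. destruct (HM _ _ (limsup_lt_dbar_shift_iter Hm T x y _ j (Hclose x y ltac:(lra))))
        as [k [Hk Hsmall]].
      exists k. split; [exact Hk | lra]. }
    pose proof (sum_orbit_le_of_returns Hm T x y (eps / 2) B M ltac:(lra) HB Hret n 0).
    pose proof (le_INR _ _ HNn).
    apply lt_mul_INR_iff; [exact Hn|]. simpl in *. nra.
  - apply dbar_lt_pointwise; [exact Hn|]. intros i Hi. apply Hnear; [lra | lia].
Qed.

End MeanEquicontinuity.

Lemma mean_equicontinuous_of_equicontinuous_in_mean {X : Type} (d : X -> X -> R)
  (T : X -> X) : equicontinuous_in_mean d T -> mean_equicontinuous d T.
Proof.
  intros Hem eps Heps. destruct (Hem (eps / 2)) as [delta [Hdelta H]]; [lra|].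
  exists delta. split; [exact Hdelta|]. intros x y Hxy. exists (eps / 2). split; [lra|].
  exists 1%nat. intros n Hn. left. apply H; assumption.
Qed.

Theorem mainTheorem4 (X : Type) (d : X -> X -> R) (T : X -> X)
  (Hmetric : is_metric d) (Hcompact : compact_metric d)
  (Hcont : continuous_map d T) (Hmin : minimal d T) :
  mean_equicontinuous d T <-> equicontinuous_in_mean d T.
Proof.
  split.
  - exact (equicontinuous_in_mean_of_mean_equicontinuous Hmetric Hcompact T Hcont).
  - exact (mean_equicontinuous_of_equicontinuous_in_mean d T).
Qed.
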